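(* Every Ricci-flat trajectory (as defined in the context) satisfies $(X_1,\dots,X_r,Y_2,\dots,Y_r)(s)\to E$ as $s\to+\infty$, where $E$ is the point with $X_1=0$, $X_i=\frac{\sqrt{d_i}}{n-1}$ and $Y_i=\sqrt{\frac{n-2}{\lambda_i}}\,\frac{\sqrt{d_i}}{n-1}$ for $i=2,\dots,r$.
   Context: Fix $r\ge2$, $d_1=1$, $\lambda_1=0$, and integers $d_i\ge2$ and reals $\lambda_i>0$ for $i=2,\dots,r$; $n=\sum_id_i$. Consider the ODE system, with $'=d/ds$ and $\mathcal G=\sum_{j=1}^rX_j^2$: $X_i'=X_i(\mathcal G-1)+\frac{\lambda_iY_i^2}{\sqrt{d_i}}$, $Y_i'=Y_i\big(\mathcal G-\frac{X_i}{\sqrt{d_i}}\big)$, $i=1,\dots,r$. Let $\mathcal L=\sum_iX_i^2+\sum_i\lambda_iY_i^2-1$, $\mathcal H=\sum_i\sqrt{d_i}X_i$, and $P_0$ the point $X_1=Y_1=1$, $X_i=Y_i=0$ ($i\ge2$). A Ricci-flat trajectory is a non-constant solution defined for all $s\in\mathbb R$ with $\gamma(s)\to P_0$ as $s\to-\infty$, contained in $\{\mathcal L=0,\mathcal H=1\}$, and with $Y_i(s)>0$ for all $i$ and $s$. *)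

From Stdlib Require Import Reals List.
From Coquelicot Require Import Coquelicot.
Import ListNotations.
Open Scope R_scope.

(* Indices are 0-based: paper's index i (1 <= i <= r) is index i-1 here,
   so the special index (d_1 = 1, lambda_1 = 0) is index 0. *)

Definition sumr (r : nat) (f : nat -> R) : R :=
  fold_right Rplus 0 (map f (seq 0 r)).

Definition nsum (r : nat) (d : nat -> nat) : nat :=
  fold_right Nat.add 0%nat (map d (seq 0 r)).

Definition Gfun (r : nat) (X : nat -> R -> R) (s : R) : R :=
  sumr r (fun j => (X j s) ^ 2).

Definition solves_system (r : nat) (d : nat -> nat) (lam : nat -> R)
  (X Y : nat -> R -> R) : Prop :=
  forall i s, (i < r)%nat ->
    is_derive (X i) s
      (X i s * (Gfun r X s - 1) + lam i * (Y i s) ^ 2 / sqrt (INR (d i)))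
    /\ is_derive (Y i) s
      (Y i s * (Gfun r X s - X i s / sqrt (INR (d i)))).

Definition Lfun (r : nat) (lam : nat -> R) (X Y : nat -> R -> R) (s : R) : R :=
  sumr r (fun i => (X i s) ^ 2) + sumr r (fun i => lam i * (Y i s) ^ 2) - 1.

Definition Hfun (r : nat) (d : nat -> nat) (X : nat -> R -> R) (s : R) : R :=
  sumr r (fun i => sqrt (INR (d i)) * X i s).

Definition RicciFlatTrajectory (r : nat) (d : nat -> nat) (lam : nat -> R)
  (X Y : nat -> R -> R) : Prop :=
  solves_system r d lam X Y /\
  (exists i s1 s2, (i < r)%nat /\ (X i s1 <> X i s2 \/ Y i s1 <> Y i s2)) /\
  (forall i, (i < r)%nat ->
     is_lim (X i) m_infty (Finite (if Nat.eqb i 0 then 1 else 0)) /\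
     is_lim (Y i) m_infty (Finite (if Nat.eqb i 0 then 1 else 0))) /\
  (forall s, Lfun r lam X Y s = 0 /\ Hfun r d X s = 1) /\
  (forall i s, (i < r)%nat -> 0 < Y i s).

(* On the invariant set {L = 0, H = 1} we have G = 1 - sum_i lam_i Y_i^2 in [0, 1], so the X_i
   and their first two derivatives are bounded.  Since d_1 >= 2, the quantity
   X_0^2 / Y_1^2 * exp(s/2) is nonincreasing, so X_0 decays exponentially.  The function
   Lam = sum_(i>=1) d_i ln Y_i satisfies Lam' = (n-1) V + n X_0^2 - X_0, where
   V = sum_(i>=1) (X_i - sqrt d_i (1 - X_0)/(n-1))^2 >= 0; after correcting for the decay of X_0
   it is nondecreasing and bounded above, so Barbalat's lemma gives V -> 0, i.e. the limits
   of the X_i.  Barbalat's lemma applied to X_i then gives X_i' -> 0, and the equation for X_i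
   determines the limit of Y_i^2. *)

From Stdlib Require Import Reals Lra Lia List Classical.
From Coquelicot Require Import Coquelicot.
Open Scope R_scope.

Definition lsum (l : list nat) (f : nat -> R) : R := fold_right Rplus 0 (map f l).

Lemma lsum_nil f : lsum nil f = 0.
Proof. reflexivity. Qed.

Lemma lsum_cons a l f : lsum (a :: l) f = f a + lsum l f.
Proof. reflexivity. Qed.

Lemma lsum_ext l f g : (forall i, In i l -> f i = g i) -> lsum l f = lsum l g.
Proof.
  induction l as [|a l IH]; intros Hfg; [reflexivity|].
  rewrite !lsum_cons, (Hfg a (in_eq a l)), IH; [reflexivity|].
  intros i Hi. apply Hfg, in_cons, Hi.
Qed.

Lemma lsum_le l f g : (forall i, In i l -> f i <= g i) -> lsum l f <= lsum l g.
Proof.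
  induction l as [|a l IH]; intros Hfg; [rewrite !lsum_nil; lra|].
  rewrite !lsum_cons. apply Rplus_le_compat; [apply Hfg, in_eq | apply IH].
  intros i Hi. apply Hfg, in_cons, Hi.
Qed.

Lemma lsum_const l c : lsum l (fun _ => c) = INR (length l) * c.
Proof.
  induction l as [|a l IH]; [rewrite lsum_nil; simpl; ring|].
  rewrite lsum_cons, IH. simpl length. rewrite S_INR. ring.
Qed.

Lemma lsum_nonneg l f : (forall i, In i l -> 0 <= f i) -> 0 <= lsum l f.
Proof.
  intros Hf. rewrite <- (Rmult_0_r (INR (length l))), <- lsum_const.
  now apply lsum_le.
Qed.

Lemma lsum_plus l f g : lsum l (fun i => f i + g i) = lsum l f + lsum l g.
Proof. induction l as [|a l IH]; [rewrite !lsum_nil; ring|]. rewrite !lsum_cons, IH; ring. Qed.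

Lemma lsum_scal l c f : lsum l (fun i => c * f i) = c * lsum l f.
Proof. induction l as [|a l IH]; [rewrite !lsum_nil; ring|]. rewrite !lsum_cons, IH; ring. Qed.

Lemma term_le_lsum l f j :
  In j l -> (forall i, In i l -> 0 <= f i) -> f j <= lsum l f.
Proof.
  induction l as [|a l IH]; intros Hj Hf; [destruct Hj|].
  rewrite lsum_cons. destruct Hj as [<- | Hj].
  - pose proof (lsum_nonneg l f (fun i Hi => Hf i (in_cons a i l Hi))). lra.
  - pose proof (Hf a (in_eq a l)). pose proof (IH Hj (fun i Hi => Hf i (in_cons a i l Hi))). lra.
Qed.

Lemma Rabs_lsum_le l f B :
  (forall i, In i l -> Rabs (f i) <= B) -> Rabs (lsum l f) <= INR (length l) * B.
Proof.
  induction l as [|a l IH]; intros Hf.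
  - rewrite lsum_nil, Rabs_R0. simpl. lra.
  - rewrite lsum_cons. simpl length. rewrite S_INR.
    pose proof (Rabs_triang (f a) (lsum l f)). pose proof (Hf a (in_eq a l)).
    pose proof (IH (fun i Hi => Hf i (in_cons a i l Hi))). lra.
Qed.

Lemma is_derive_lsum l (F dF : nat -> R -> R) s :
  (forall i, In i l -> is_derive (F i) s (dF i s)) ->
  is_derive (fun t => lsum l (fun i => F i t)) s (lsum l (fun i => dF i s)).
Proof.
  induction l as [|a l IH]; intros HF.
  - exact (is_derive_const 0 s).
  - exact (is_derive_plus (F a) (fun t => lsum l (fun i => F i t)) s _ _
             (HF a (in_eq a l)) (IH (fun i Hi => HF i (in_cons a i l Hi)))).
Qed.

Lemma sumr_split0 r f : (1 <= r)%nat -> sumr r f = f 0%nat + lsum (seq 1 (r - 1)) f.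
Proof. intros Hr. destruct r as [|r]; [lia|]. simpl. rewrite Nat.sub_0_r. reflexivity. Qed.

Lemma INR_nsum r d : INR (nsum r d) = sumr r (fun i => INR (d i)).
Proof.
  unfold nsum, sumr. induction (seq 0 r) as [|a l IH]; [reflexivity|].
  simpl. rewrite plus_INR, IH. reflexivity.
Qed.

Lemma Rabs_mult_le a b A B : Rabs a <= A -> Rabs b <= B -> Rabs (a * b) <= A * B.
Proof. intros. rewrite Rabs_mult. apply Rmult_le_compat; auto; apply Rabs_pos. Qed.

Lemma Rabs_div_le a b : 1 <= b -> Rabs (a / b) <= Rabs a.
Proof.
  intros Hb. rewrite Rabs_div, (Rabs_right b) by lra. pose proof (Rabs_pos a).
  apply Rmult_le_reg_r with b; [lra|]. unfold Rdiv. rewrite Rmult_assoc, Rinv_l; nra.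
Qed.

Lemma ln_lt_self y : 0 < y -> ln y < y.
Proof.
  intros Hy. destruct (Req_dec (ln y) 0) as [E | E]; [lra|].
  pose proof (exp_ineq1 (ln y) E). rewrite exp_ln in *; lra.
Qed.

Lemma is_derive_ext_R (f g : R -> R) (x l : R) :
  (forall t, f t = g t) -> is_derive f x l -> is_derive g x l.
Proof. apply is_derive_ext. Qed.

Lemma is_derive_Rmult (f g : R -> R) x df dg :
  is_derive f x df -> is_derive g x dg ->
  is_derive (fun t => f t * g t) x (df * g x + f x * dg).
Proof. intros Hf Hg. apply (is_derive_mult f g x df dg Hf Hg). intros; apply Rmult_comm. Qed.

Lemma is_derive_sq (f : R -> R) x df :
  is_derive f x df -> is_derive (fun t => f t ^ 2) x (2 * f x * df).
Proof.
  intros Hf. replace (2 * f x * df) with (INR 2 * df * f x ^ Nat.pred 2) by (simpl; ring).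
  exact (is_derive_pow f 2 x df Hf).
Qed.

Lemma is_derive_exp_lin c a t : is_derive (fun u => c * exp (a * u)) t (a * (c * exp (a * t))).
Proof. auto_derive; [exact I | ring]. Qed.

Lemma mean_value f df a b :
  (forall t, a <= t <= b -> is_derive f t (df t)) -> a <= b ->
  exists c, a <= c <= b /\ f b - f a = df c * (b - a).
Proof.
  intros Hf Hab. destruct (Req_dec a b) as [<- | Hne].
  - exists a. split; [lra | ring].
  - destruct (MVT_cor3 f df a b) as [c [Hac [Hcb E]]]; [lra | |].
    + intros t Hat Htb. apply is_derive_Reals, Hf. lra.
    + exists c. split; [lra|]. rewrite E. ring.
Qed.

Lemma nondecreasing_of_derive_nonneg f df a b :
  (forall t, a <= t <= b -> is_derive f t (df t)) ->
  (forall t, a <= t <= b -> 0 <= df t) -> a <= b -> f a <= f b.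
Proof.
  intros Hf Hdf Hab. destruct (mean_value f df a b Hf Hab) as [c [Hc E]].
  pose proof (Hdf c Hc). nra.
Qed.

Lemma Rabs_diff_le_of_derive_bound f df B a b :
  (forall t, a <= t <= b -> is_derive f t (df t)) ->
  (forall t, a <= t <= b -> Rabs (df t) <= B) -> a <= b ->
  Rabs (f b - f a) <= B * (b - a).
Proof.
  intros Hf HB Hab. destruct (mean_value f df a b Hf Hab) as [c [Hc E]].
  rewrite E, Rabs_mult, (Rabs_right (b - a)) by lra.
  apply Rmult_le_compat_r; [lra | apply HB, Hc].
Qed.

Lemma barbalat (f g g' : R -> R) (l B : R) :
  (forall t, is_derive f t (g t)) -> (forall t, is_derive g t (g' t)) ->
  (forall t, 0 <= t -> Rabs (g' t) <= B) ->
  is_lim f p_infty l -> is_lim g p_infty 0.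
Proof.
  intros Hf Hg HB Hlim. apply is_lim_spec in Hlim. unfold is_lim' in Hlim.
  apply is_lim_spec. unfold is_lim'. intros [eps Heps]; simpl.
  assert (HB0 : 0 <= B) by (pose proof (HB 0 (Rle_refl 0)); pose proof (Rabs_pos (g' 0)); lra).
  set (h := eps / (2 * (B + 1))).
  assert (Hh : 0 < h) by (unfold h; apply Rdiv_lt_0_compat; lra).
  assert (HBh : B * h < eps / 2).
  { apply Rlt_le_trans with ((B + 1) * h); [nra|]. unfold h. right. field. lra. }
  destruct (Hlim (mkposreal (eps * h / 4) ltac:(apply Rdiv_lt_0_compat; nra))) as [S HS]; simpl in HS.
  exists (Rmax S 0). intros s Hs. pose proof (Rmax_l S 0). pose proof (Rmax_r S 0).
  rewrite Rminus_0_r. apply Rnot_le_lt. intros Hge.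
  (* the derivative stays above eps/2 on [s, s + h], so f moves by at least eps h / 2 *)
  destruct (mean_value f g s (s + h)) as [c [Hc E]]; [intros; apply Hf | lra |].
  pose proof (Rabs_diff_le_of_derive_bound g g' B s c (fun t _ => Hg t)
                (fun t Ht => HB t ltac:(lra)) ltac:(lra)) as Hgc.
  assert (eps / 2 <= Rabs (g c)).
  { pose proof (Rabs_triang_inv (g s) (g c)). rewrite Rabs_minus_sym in Hgc.
    assert (B * (c - s) <= B * h) by (apply Rmult_le_compat_l; lra). lra. }
  assert (eps / 2 * h <= Rabs (f (s + h) - f s)).
  { rewrite E, Rabs_mult. replace (s + h - s) with h by ring.
    rewrite (Rabs_right h) by lra. apply Rmult_le_compat_r; lra. }
  pose proof (HS s ltac:(lra)). pose proof (HS (s + h) ltac:(lra)).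
  pose proof (Rabs_triang (f (s + h) - l) (l - f s)).
  replace (f (s + h) - l + (l - f s)) with (f (s + h) - f s) in * by ring.
  rewrite (Rabs_minus_sym l) in *. nra.
Qed.

Lemma nondecreasing_bounded_has_limit f U :
  (forall a b, 0 <= a <= b -> f a <= f b) -> (forall s, 0 <= s -> f s <= U) ->
  exists l : R, is_lim f p_infty l.
Proof.
  intros Hmono Hbound.
  destruct (completeness (fun y => exists s, 0 <= s /\ y = f s)) as [l [Hub Hlub]].
  - exists U. intros y [s [Hs ->]]. auto.
  - exists (f 0), 0. split; lra.
  - exists l. apply is_lim_spec. unfold is_lim'. intros [eps Heps]; simpl.
    assert (Hs0 : exists s0, 0 <= s0 /\ l - eps < f s0).
    { apply NNPP. intros Hn. assert (l <= l - eps); [|lra]. apply Hlub.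
      intros y [s [Hs ->]]. apply Rnot_lt_le. intros Hlt. apply Hn. exists s; auto. }
    destruct Hs0 as [s0 [Hs0 Hl]]. exists s0. intros s Hs.
    assert (f s <= l) by (apply Hub; exists s; split; lra).
    assert (f s0 <= f s) by (apply Hmono; lra).
    rewrite Rabs_left1 by lra. lra.
Qed.

Lemma is_lim_eq_lim (f : R -> R) (x : Rbar) (l l' : R) : l = l' -> is_lim f x l -> is_lim f x l'.
Proof. intros ->. exact (fun H => H). Qed.

Lemma is_lim_mult' (f g : R -> R) (lf lg : R) :
  is_lim f p_infty lf -> is_lim g p_infty lg -> is_lim (fun s => f s * g s) p_infty (lf * lg).
Proof. intros Hf Hg. exact (is_lim_mult f g p_infty lf lg Hf Hg I). Qed.

Lemma is_lim_sqrt f l : 0 <= l -> is_lim f p_infty l -> is_lim (fun s => sqrt (f s)) p_infty (sqrt l).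
Proof.
  intros Hl Hf. eapply filterlim_comp; [apply Hf|].
  apply continuity_pt_filterlim, continuity_pt_sqrt, Hl.
Qed.

Lemma is_lim_0_of_Rabs_le f g :
  (forall s, 0 <= s -> Rabs (f s) <= g s) -> is_lim g p_infty 0 -> is_lim f p_infty 0.
Proof.
  intros Hfg Hg. apply (is_lim_le_le_loc (fun s => - g s) g).
  - exists 0. intros s Hs. pose proof (Hfg s ltac:(lra)). apply Rabs_le_between. lra.
  - replace (Finite 0) with (Rbar_opp 0) by (simpl; f_equal; ring). now apply is_lim_opp.
  - exact Hg.
Qed.

Lemma is_lim_0_of_sqr_le f g :
  (forall s, 0 <= s -> f s ^ 2 <= g s) -> is_lim g p_infty 0 -> is_lim f p_infty 0.
Proof.
  intros Hfg Hg. apply (is_lim_0_of_Rabs_le f (fun s => sqrt (g s))).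
  - intros s Hs. rewrite <- sqrt_Rsqr_abs. apply sqrt_le_1_alt.
    replace (Rsqr (f s)) with (f s ^ 2) by (unfold Rsqr; ring). apply Hfg, Hs.
  - rewrite <- sqrt_0. apply is_lim_sqrt; [lra | exact Hg].
Qed.

Lemma is_lim_exp_decay K a : 0 < a -> is_lim (fun s => K * exp (- a * s)) p_infty 0.
Proof.
  intros Ha. replace (Finite 0) with (Rbar_mult K 0) by (simpl; f_equal; ring).
  apply is_lim_scal_l. apply (is_lim_comp exp (fun s => - a * s) p_infty 0 m_infty).
  - apply is_lim_exp_m.
  - apply is_lim_spec. intros M. exists (- M / a). intros s Hs.
    apply (Rmult_lt_compat_l a) in Hs; [|exact Ha].
    replace (a * (- M / a)) with (- M) in Hs by (field; lra). lra.
  - exists 0. intros s _. discriminate.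
Qed.

Section OnInvariantSet.

Variables (r : nat) (d : nat -> nat) (lam : nat -> R) (X Y : nat -> R -> R).

Hypothesis r_ge2 : (2 <= r)%nat.
Hypothesis d_0 : d 0%nat = 1%nat.
Hypothesis lam_0 : lam 0%nat = 0.
Hypothesis d_ge2 : forall i, (1 <= i < r)%nat -> (2 <= d i)%nat.
Hypothesis lam_pos : forall i, (1 <= i < r)%nat -> 0 < lam i.
Hypothesis solves : solves_system r d lam X Y.
Hypothesis on_L_H : forall s, Lfun r lam X Y s = 0 /\ Hfun r d X s = 1.
Hypothesis Y_pos : forall i s, (i < r)%nat -> 0 < Y i s.

Let J := seq 1 (r - 1).
Let G := Gfun r X.
Let n := INR (nsum r d).
Let sd i := sqrt (INR (d i)).
Let dX i s := X i s * (G s - 1) + lam i * Y i s ^ 2 / sd i.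
Let dY i s := Y i s * (G s - X i s / sd i).

Lemma In_J i : In i J <-> (1 <= i < r)%nat.
Proof. unfold J. rewrite in_seq. lia. Qed.

Lemma sumr_split f : sumr r f = f 0%nat + lsum J f.
Proof. apply sumr_split0. lia. Qed.

Lemma sd_sq i : sd i * sd i = INR (d i).
Proof. apply sqrt_sqrt, pos_INR. Qed.

Lemma sd_ge i : (1 <= i < r)%nat -> 4 / 3 <= sd i.
Proof.
  intros Hi. pose proof (sd_sq i). pose proof (sqrt_pos (INR (d i))).
  assert (2 <= INR (d i)) by (apply (le_INR 2), d_ge2, Hi). unfold sd in *. nra.
Qed.

Lemma n_eq : n = 1 + lsum J (fun i => INR (d i)).
Proof. unfold n. rewrite INR_nsum, sumr_split, d_0. reflexivity. Qed.

Lemma n_ge3 : 3 <= n.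
Proof.
  rewrite n_eq. assert (2 <= INR (d 1%nat)) by (apply (le_INR 2), d_ge2; lia).
  assert (INR (d 1%nat) <= lsum J (fun i => INR (d i))).
  { apply (term_le_lsum J (fun i => INR (d i))); [apply In_J; lia | intros; apply pos_INR]. }
  lra.
Qed.

Lemma lam_Y_sq_nonneg i s : (i < r)%nat -> 0 <= lam i * Y i s ^ 2.
Proof.
  intros Hi. destruct (Nat.eq_dec i 0) as [-> | Hi0].
  - rewrite lam_0. lra.
  - pose proof (lam_pos i ltac:(lia)). pose proof (pow2_ge_0 (Y i s)). nra.
Qed.

Lemma G_eq s : G s = 1 - lsum J (fun i => lam i * Y i s ^ 2).
Proof.
  destruct (on_L_H s) as [HL _]. unfold Lfun in HL. rewrite (sumr_split (fun i => lam i * _)) in HL.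
  rewrite lam_0 in HL. unfold G, Gfun. lra.
Qed.

Lemma G_split s : G s = X 0%nat s ^ 2 + lsum J (fun i => X i s ^ 2).
Proof. apply sumr_split. Qed.

Lemma H_split s : X 0%nat s + lsum J (fun i => sd i * X i s) = 1.
Proof.
  destruct (on_L_H s) as [_ HH]. unfold Hfun in HH. rewrite sumr_split in HH.
  rewrite d_0, INR_1, sqrt_1 in HH. unfold sd. lra.
Qed.

Lemma lam_Y_sq_le i s : (1 <= i < r)%nat -> lam i * Y i s ^ 2 <= 1 - G s.
Proof.
  intros Hi. rewrite G_eq. ring_simplify.
  apply (term_le_lsum J (fun j => lam j * Y j s ^ 2)); [apply In_J, Hi|].
  intros j Hj. apply In_J in Hj. apply lam_Y_sq_nonneg. lia.
Qed.

Lemma G_bounds s : 0 <= G s <= 1.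
Proof.
  split.
  - apply lsum_nonneg. intros. apply pow2_ge_0.
  - rewrite G_eq. pose proof (lsum_nonneg J (fun i => lam i * Y i s ^ 2)).
    assert (forall i, In i J -> 0 <= lam i * Y i s ^ 2).
    { intros i Hi. apply In_J in Hi. apply lam_Y_sq_nonneg. lia. }
    intuition lra.
Qed.

Lemma X_sq_le_G i s : (i < r)%nat -> X i s ^ 2 <= G s.
Proof.
  intros Hi. apply (term_le_lsum (seq 0 r) (fun j => X j s ^ 2)).
  - apply in_seq. lia.
  - intros. apply pow2_ge_0.
Qed.

Lemma X_bound i s : (i < r)%nat -> Rabs (X i s) <= 1.
Proof.
  intros Hi. pose proof (X_sq_le_G i s Hi). pose proof (G_bounds s).
  rewrite <- (pow2_abs (X i s)) in *. pose proof (Rabs_pos (X i s)). nra.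
Qed.

Lemma X_derive i s : (i < r)%nat -> is_derive (X i) s (dX i s).
Proof. intros Hi. apply (solves i s Hi). Qed.

Lemma Y_derive i s : (i < r)%nat -> is_derive (Y i) s (dY i s).
Proof. intros Hi. apply (solves i s Hi). Qed.

Lemma dX_0 s : dX 0%nat s = X 0%nat s * (G s - 1).
Proof. unfold dX. rewrite lam_0. unfold Rdiv. ring. Qed.

Lemma dX_bound i s : (i < r)%nat -> Rabs (dX i s) <= 2.
Proof.
  intros Hi. pose proof (G_bounds s).
  assert (HXG : Rabs (X i s * (G s - 1)) <= 1 * 1).
  { apply Rabs_mult_le; [apply X_bound, Hi | rewrite Rabs_left1; lra]. }
  destruct (Nat.eq_dec i 0) as [-> | Hi0]; [rewrite dX_0; lra|].
  assert (Hi' : (1 <= i < r)%nat) by lia.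
  pose proof (lam_Y_sq_nonneg i s Hi). pose proof (lam_Y_sq_le i s Hi'). pose proof (sd_ge i Hi').
  assert (0 <= lam i * Y i s ^ 2 / sd i <= 1).
  { split; [apply Rdiv_le_0_compat; lra|].
    apply Rmult_le_reg_r with (sd i); [lra|]. unfold Rdiv. rewrite Rmult_assoc, Rinv_l; lra. }
  unfold dX. pose proof (Rabs_triang (X i s * (G s - 1)) (lam i * Y i s ^ 2 / sd i)).
  rewrite (Rabs_right (lam i * Y i s ^ 2 / sd i)) in * by lra. lra.
Qed.

Let dG s := lsum (seq 0 r) (fun j => 2 * X j s * dX j s).

Lemma G_derive s : is_derive G s (dG s).
Proof.
  apply (is_derive_lsum (seq 0 r) (fun j t => X j t ^ 2) (fun j t => 2 * X j t * dX j t)).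
  intros j Hj. apply in_seq in Hj. apply is_derive_sq, X_derive. lia.
Qed.

Lemma dG_bound s : Rabs (dG s) <= INR r * 4.
Proof.
  rewrite <- (length_seq r 0). apply Rabs_lsum_le. intros j Hj. apply in_seq in Hj.
  rewrite Rmult_assoc, Rabs_mult, Rabs_right by lra.
  pose proof (Rabs_mult_le _ _ _ _ (X_bound j s ltac:(lia)) (dX_bound j s ltac:(lia))). lra.
Qed.

Let q t := X 0%nat t ^ 2 / Y 1%nat t ^ 2 * exp (t / 2).

Lemma q_derive t : is_derive q t (q t * (2 * (X 1%nat t / sd 1%nat) - 3 / 2)).
Proof.
  assert (HY1 : 0 < Y 1%nat t) by (apply Y_pos; lia).
  pose proof (sd_ge 1 ltac:(lia)).
  assert (Hexp : is_derive (fun u => exp (u / 2)) t (exp (t / 2) / 2)).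
  { auto_derive; [exact I | unfold Rdiv; ring]. }
  pose proof (is_derive_inv _ t _ (is_derive_sq _ t _ (Y_derive 1 t ltac:(lia)))
                (pow_nonzero (Y 1%nat t) 2 ltac:(lra))) as HinvY.
  pose proof (is_derive_Rmult _ _ t _ _
                (is_derive_Rmult _ _ t _ _ (is_derive_sq _ t _ (X_derive 0 t ltac:(lia))) HinvY)
                Hexp) as Hq.
  unfold q, Rdiv at 1 3. eapply is_derive_ext; [intros u; reflexivity|].
  replace (q t * _) with (((2 * X 0%nat t * dX 0%nat t) * / Y 1%nat t ^ 2
      + X 0%nat t ^ 2 * (- (2 * Y 1%nat t * dY 1%nat t) / (Y 1%nat t ^ 2) ^ 2)) * exp (t / 2)
      + X 0%nat t ^ 2 * / Y 1%nat t ^ 2 * (exp (t / 2) / 2)); [exact Hq|].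
  unfold q. rewrite dX_0. unfold dY. field. lra.
Qed.

Lemma q_nonincreasing s t : s <= t -> q t <= q s.
Proof.
  intros Hst. apply Ropp_le_cancel.
  apply (nondecreasing_of_derive_nonneg (fun u => - q u)
           (fun u => - (q u * (2 * (X 1%nat u / sd 1%nat) - 3 / 2)))); [| |exact Hst].
  - intros u _. apply (is_derive_opp q), q_derive.
  - intros u _. pose proof (sd_ge 1 ltac:(lia)) as Hsd1.
    pose proof (X_bound 1 u ltac:(lia)) as HX1. apply Rabs_le_between in HX1.
    assert (X 1%nat u / sd 1%nat <= 3 / 4).
    { apply Rmult_le_reg_r with (sd 1%nat); [lra|]. unfold Rdiv. rewrite Rmult_assoc, Rinv_l; lra. }
    assert (0 <= q u).
    { pose proof (Y_pos 1 u ltac:(lia)). unfold q. apply Rmult_le_pos; [|left; apply exp_pos].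
      apply Rdiv_le_0_compat; [apply pow2_ge_0 | apply pow_lt; lra]. }
    nra.
Qed.

(* X_0^2 / Y_1^2 decays like exp(-s/2), and Y_1 is bounded. *)
Lemma X0_exp_decay : exists K, 0 <= K /\ forall s, 0 <= s -> Rabs (X 0%nat s) <= K * exp (- (1 / 4) * s).
Proof.
  exists (sqrt (q 0 / lam 1%nat)). split; [apply sqrt_pos|]. intros s Hs.
  assert (Hl1 : 0 < lam 1%nat) by (apply lam_pos; lia).
  assert (HY1 : 0 < Y 1%nat s) by (apply Y_pos; lia).
  assert (Hq0 : 0 <= q s <= q 0).
  { split; [|apply q_nonincreasing, Hs]. unfold q. apply Rmult_le_pos; [|left; apply exp_pos].
    apply Rdiv_le_0_compat; [apply pow2_ge_0 | apply pow_lt; lra]. }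
  assert (HY1b : Y 1%nat s ^ 2 <= / lam 1%nat).
  { pose proof (lam_Y_sq_le 1 s ltac:(lia)). pose proof (G_bounds s).
    apply Rmult_le_reg_l with (lam 1%nat); [lra|]. rewrite Rinv_r; lra. }
  assert (Hexp : exp (s / 2) * exp (- (1 / 4) * s) ^ 2 = 1).
  { simpl. rewrite Rmult_1_r, <- !exp_plus.
    replace (s / 2 + (- (1 / 4) * s + - (1 / 4) * s)) with 0 by lra. apply exp_0. }
  set (K := sqrt (q 0 / lam 1%nat)). set (e := exp (- (1 / 4) * s)) in *.
  assert (HK : K * K = q 0 / lam 1%nat) by (apply sqrt_sqrt, Rdiv_le_0_compat; lra).
  assert (HX2 : Rsqr (X 0%nat s) <= Rsqr (K * e)).
  { unfold Rsqr. replace (K * e * (K * e)) with (q 0 / lam 1%nat * e ^ 2) by (rewrite <- HK; ring).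
    replace (X 0%nat s * X 0%nat s) with (q s * Y 1%nat s ^ 2 * e ^ 2).
    2: { transitivity (X 0%nat s ^ 2 * (exp (s / 2) * e ^ 2)); [unfold q; field; lra | rewrite Hexp; ring]. }
    unfold Rdiv. apply Rmult_le_compat_r; [apply pow2_ge_0|].
    apply Rmult_le_compat; [lra | apply pow2_ge_0 | lra | exact HY1b]. }
  apply Rsqr_le_abs_0 in HX2. rewrite (Rabs_right (K * e)) in HX2; [exact HX2|].
  apply Rle_ge, Rmult_le_pos; [apply sqrt_pos | left; apply exp_pos].
Qed.

Let m s := (1 - X 0%nat s) / (n - 1).
Let V s := G s - X 0%nat s ^ 2 - (1 - X 0%nat s) ^ 2 / (n - 1).

Lemma V_sum_of_squares s : V s = lsum J (fun j => (X j s - m s * sd j) ^ 2).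
Proof.
  rewrite (lsum_ext J _ (fun j => X j s ^ 2 + ((-2 * m s) * (sd j * X j s) + m s ^ 2 * INR (d j)))).
  2: { intros j _. rewrite <- sd_sq. ring. }
  rewrite !lsum_plus, !lsum_scal.
  pose proof (G_split s). pose proof (H_split s). pose proof n_eq. pose proof n_ge3.
  replace (lsum J (fun j => X j s ^ 2)) with (G s - X 0%nat s ^ 2) by lra.
  replace (lsum J (fun j => sd j * X j s)) with (1 - X 0%nat s) by lra.
  replace (lsum J (fun j => INR (d j))) with (n - 1) by lra.
  unfold V, m. field. lra.
Qed.

Lemma X_deviation_le_V i s : (1 <= i < r)%nat -> (X i s - m s * sd i) ^ 2 <= V s.
Proof.
  intros Hi. rewrite V_sum_of_squares.
  apply (term_le_lsum J (fun j => (X j s - m s * sd j) ^ 2)); [apply In_J, Hi|].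
  intros. apply pow2_ge_0.
Qed.

Lemma V_nonneg s : 0 <= V s.
Proof. eapply Rle_trans; [apply pow2_ge_0 | apply (X_deviation_le_V 1); lia]. Qed.

Let Lam s := lsum J (fun i => INR (d i) * ln (Y i s)).

Lemma Lam_derive s : is_derive Lam s ((n - 1) * G s - 1 + X 0%nat s).
Proof.
  replace ((n - 1) * G s - 1 + X 0%nat s) with (lsum J (fun i => INR (d i) * (dY i s * / Y i s))).
  - apply (is_derive_lsum J (fun i t => INR (d i) * ln (Y i t)) (fun i t => INR (d i) * (dY i t * / Y i t))).
    intros i Hi. apply In_J in Hi. apply is_derive_scal.
    exact (is_derive_comp ln (Y i) s _ _ (is_derive_ln _ (Y_pos i s ltac:(lia))) (Y_derive i s ltac:(lia))).
  - rewrite (lsum_ext J _ (fun i => G s * INR (d i) + (-1) * (sd i * X i s))).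
    + rewrite lsum_plus, !lsum_scal.
      replace (lsum J (fun i => INR (d i))) with (n - 1) by (rewrite n_eq; ring).
      replace (lsum J (fun i => sd i * X i s)) with (1 - X 0%nat s) by (pose proof (H_split s); lra).
      ring.
    + intros i Hi. apply In_J in Hi. pose proof (Y_pos i s ltac:(lia)). pose proof (sd_ge i Hi).
      rewrite <- sd_sq. unfold dY. field. lra.
Qed.

Lemma Lam_bound s : Lam s <= lsum J (fun i => INR (d i) * (1 + / lam i)).
Proof.
  apply lsum_le. intros i Hi. apply In_J in Hi. apply Rmult_le_compat_l; [apply pos_INR|].
  pose proof (Y_pos i s ltac:(lia)). pose proof (ln_lt_self _ H). pose proof (lam_pos i Hi).
  assert (Y i s ^ 2 <= / lam i).
  { pose proof (lam_Y_sq_le i s Hi). pose proof (G_bounds s).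
    apply Rmult_le_reg_l with (lam i); [lra|]. rewrite Rinv_r; lra. }
  nra.
Qed.

(* [Lam' + K exp(-t/4)]: it dominates [(n-1) V] as soon as [|X_0| <= K exp(-t/4)],
   because [Lam' = (n-1) V + n X_0^2 - X_0]. *)
Let rate K t := (n - 1) * G t - 1 + X 0%nat t + K * exp (- (1 / 4) * t).

Section Decay.

Variable K : R.
Hypothesis K_nonneg : 0 <= K.
Hypothesis X0_decay : forall s, 0 <= s -> Rabs (X 0%nat s) <= K * exp (- (1 / 4) * s).

Lemma V_le_rate t : 0 <= t -> (n - 1) * V t <= rate K t.
Proof.
  intros Ht. pose proof (X0_decay t Ht). pose proof (Rle_abs (X 0%nat t)). pose proof n_ge3.
  assert (0 <= n * X 0%nat t ^ 2) by (apply Rmult_le_pos; [lra | apply pow2_ge_0]).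
  assert (rate K t - (n - 1) * V t = n * X 0%nat t ^ 2 - X 0%nat t + K * exp (- (1 / 4) * t))
    by (unfold rate, V; field; lra).
  lra.
Qed.

Lemma rate_derive t :
  is_derive (rate K) t ((n - 1) * dG t + dX 0%nat t + - (1 / 4) * (K * exp (- (1 / 4) * t))).
Proof.
  apply (is_derive_plus (fun u => (n - 1) * G u - 1 + X 0%nat u)).
  - apply (is_derive_plus (fun u => (n - 1) * G u - 1)); [|apply X_derive; lia].
    eapply is_derive_ext; [intros u; unfold Rminus; reflexivity|].
    replace ((n - 1) * dG t) with ((n - 1) * dG t + 0) by ring.
    apply (is_derive_plus (fun u => (n - 1) * G u)); [apply is_derive_scal, G_derive | exact (is_derive_const (-1) t)].
  - apply is_derive_exp_lin.
Qed.

Lemma rate_tends_to_0 : is_lim (rate K) p_infty 0.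
Proof.
  set (M t := Lam t + (-4 * K) * exp (- (1 / 4) * t)).
  assert (HM : forall t : R, is_derive M t (rate K t)).
  { intros t. replace (rate K t) with (((n - 1) * G t - 1 + X 0%nat t) + - (1 / 4) * (-4 * K * exp (- (1 / 4) * t)))
      by (unfold rate; lra).
    apply (is_derive_plus Lam); [apply Lam_derive | apply is_derive_exp_lin]. }
  assert (Hmono : forall a b, 0 <= a <= b -> M a <= M b).
  { intros a b Hab. apply (nondecreasing_of_derive_nonneg M (rate K)); [intros; apply HM | | lra].
    intros t Ht. pose proof (V_le_rate t ltac:(lra)). pose proof (V_nonneg t). pose proof n_ge3. nra. }
  destruct (nondecreasing_bounded_has_limit M (lsum J (fun i => INR (d i) * (1 + / lam i))) Hmono)
    as [l Hl].
  { intros s _. pose proof (Lam_bound s). pose proof (exp_pos (- (1 / 4) * s)). unfold M. nra. }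
  apply (barbalat M (rate K) _ l ((n - 1) * (INR r * 4) + 2 + K) HM rate_derive); [|exact Hl].
  intros t Ht. pose proof (dG_bound t). pose proof (dX_bound 0 t ltac:(lia)). pose proof n_ge3.
  pose proof (exp_pos (- (1 / 4) * t)).
  assert (He1 : exp (- (1 / 4) * t) <= exp 0).
  { destruct (Rle_lt_or_eq_dec 0 t Ht) as [Hlt | <-].
    - left. apply exp_increasing. lra.
    - right. f_equal. ring. }
  rewrite exp_0 in He1.
  assert (Rabs ((n - 1) * dG t) <= (n - 1) * (INR r * 4)).
  { rewrite Rabs_mult, Rabs_right by lra. apply Rmult_le_compat_l; lra. }
  assert (Rabs (- (1 / 4) * (K * exp (- (1 / 4) * t))) <= K).
  { rewrite Rabs_mult, Rabs_left, Rabs_right by nra. nra. }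
  pose proof (Rabs_triang ((n - 1) * dG t + dX 0%nat t) (- (1 / 4) * (K * exp (- (1 / 4) * t)))).
  pose proof (Rabs_triang ((n - 1) * dG t) (dX 0%nat t)). lra.
Qed.

End Decay.

Lemma V_tends_to_0 : is_lim V p_infty 0.
Proof.
  destruct X0_exp_decay as [K [HK Hdecay]]. pose proof n_ge3.
  apply (is_lim_0_of_Rabs_le V (fun t => / (n - 1) * rate K t)).
  - intros t Ht. rewrite Rabs_right by (apply Rle_ge, V_nonneg).
    apply Rmult_le_reg_l with (n - 1); [lra|]. rewrite <- Rmult_assoc, Rinv_r, Rmult_1_l by lra.
    apply V_le_rate; assumption.
  - replace (Finite 0) with (Rbar_mult (/ (n - 1)) 0) by (simpl; f_equal; ring).
    apply is_lim_scal_l, rate_tends_to_0; assumption.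
Qed.


Lemma X0_tends_to_0 : is_lim (X 0%nat) p_infty 0.
Proof.
  destruct X0_exp_decay as [K [_ Hdecay]].
  apply (is_lim_0_of_Rabs_le _ _ Hdecay), is_lim_exp_decay. lra.
Qed.

Lemma G_tends_to : is_lim G p_infty (/ (n - 1)).
Proof.
  pose proof n_ge3.
  apply (is_lim_ext (fun s => V s + X 0%nat s * X 0%nat s + (1 - X 0%nat s) * (1 - X 0%nat s) * / (n - 1))).
  { intros s. unfold V. field. lra. }
  apply (is_lim_eq_lim _ _ (0 + 0 * 0 + (1 - 0) * (1 - 0) * / (n - 1))); [field; lra|].
  pose proof X0_tends_to_0. pose proof (is_lim_const 1 p_infty).
  apply is_lim_plus'; [apply is_lim_plus'; [apply V_tends_to_0 | apply is_lim_mult'; assumption]|].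
  apply is_lim_mult'; [apply is_lim_mult'; apply is_lim_minus'; assumption | apply is_lim_const].
Qed.

Lemma X_tends_to i : (1 <= i < r)%nat -> is_lim (X i) p_infty (sd i / (n - 1)).
Proof.
  intros Hi. pose proof n_ge3.
  apply (is_lim_ext (fun s => (X i s - m s * sd i) + (1 - X 0%nat s) * / (n - 1) * sd i)).
  { intros s. unfold m. field. lra. }
  apply (is_lim_eq_lim _ _ (0 + (1 - 0) * / (n - 1) * sd i)); [field; lra|].
  apply is_lim_plus'.
  - apply (is_lim_0_of_sqr_le _ V); [intros s _; apply X_deviation_le_V, Hi | apply V_tends_to_0].
  - apply is_lim_mult'; [apply is_lim_mult'|]; try apply is_lim_const.
    apply is_lim_minus'; [apply is_lim_const | apply X0_tends_to_0].
Qed.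

Let ddX i t := dX i t * (G t - 1) + X i t * dG t + 2 * (lam i * Y i t ^ 2) * ((G t - X i t / sd i) / sd i).

Lemma dX_derive i t : (1 <= i < r)%nat -> is_derive (dX i) t (ddX i t).
Proof.
  intros Hi. pose proof (sd_ge i Hi). assert (Hir : (i < r)%nat) by lia.
  apply (is_derive_ext_R (fun u => X i u * G u - X i u + lam i / sd i * Y i u ^ 2)).
  { intros u. unfold dX. field. lra. }
  replace (ddX i t) with (dX i t * G t + X i t * dG t - dX i t + lam i / sd i * (2 * Y i t * dY i t))
    by (unfold ddX, dY; field; lra).
  apply (is_derive_plus (fun u => X i u * G u - X i u)).
  - apply (is_derive_minus (fun u => X i u * G u)); [|apply X_derive, Hir].
    apply is_derive_Rmult; [apply X_derive, Hir | apply G_derive].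
  - apply is_derive_scal, is_derive_sq, Y_derive, Hir.
Qed.

Lemma ddX_bound i t : (1 <= i < r)%nat -> Rabs (ddX i t) <= 6 + INR r * 4.
Proof.
  intros Hi. assert (Hir : (i < r)%nat) by lia.
  pose proof (G_bounds t). pose proof (sd_ge i Hi).
  pose proof (lam_Y_sq_nonneg i t Hir). pose proof (lam_Y_sq_le i t Hi).
  assert (HA : Rabs (dX i t * (G t - 1)) <= 2 * 1).
  { apply Rabs_mult_le; [apply dX_bound, Hir | rewrite Rabs_left1; lra]. }
  assert (HB : Rabs (X i t * dG t) <= 1 * (INR r * 4)).
  { apply Rabs_mult_le; [apply X_bound, Hir | apply dG_bound]. }
  assert (HC : Rabs (2 * (lam i * Y i t ^ 2) * ((G t - X i t / sd i) / sd i)) <= (2 * 1) * 2).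
  { apply Rabs_mult_le; [rewrite Rabs_right; lra|].
    eapply Rle_trans; [apply Rabs_div_le; lra|].
    eapply Rle_trans; [apply Rabs_triang|]. rewrite Rabs_Ropp, (Rabs_right (G t)) by lra.
    pose proof (Rabs_div_le (X i t) (sd i) ltac:(lra)). pose proof (X_bound i t Hir). lra. }
  unfold ddX. pose proof (Rabs_triang (dX i t * (G t - 1) + X i t * dG t)
                           (2 * (lam i * Y i t ^ 2) * ((G t - X i t / sd i) / sd i))).
  pose proof (Rabs_triang (dX i t * (G t - 1)) (X i t * dG t)). lra.
Qed.

Lemma dX_tends_to_0 i : (1 <= i < r)%nat -> is_lim (dX i) p_infty 0.
Proof.
  intros Hi. apply (barbalat (X i) (dX i) (ddX i) (sd i / (n - 1)) (6 + INR r * 4)).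
  - intros t. apply X_derive. lia.
  - intros t. apply dX_derive, Hi.
  - intros t _. apply ddX_bound, Hi.
  - apply X_tends_to, Hi.
Qed.

Lemma Y_tends_to i : (1 <= i < r)%nat ->
  is_lim (Y i) p_infty (sqrt ((n - 2) / lam i) * (sd i / (n - 1))).
Proof.
  intros Hi. pose proof n_ge3. pose proof (sd_ge i Hi). pose proof (lam_pos i Hi).
  set (L := sqrt ((n - 2) / lam i) * (sd i / (n - 1))).
  assert (HL : 0 <= L) by (apply Rmult_le_pos; [apply sqrt_pos | apply Rdiv_le_0_compat; lra]).
  assert (HY2 : is_lim (fun s => Y i s ^ 2) p_infty (L ^ 2)).
  { apply (is_lim_ext (fun s => sd i / lam i * (dX i s - X i s * (G s - 1)))).
    { intros s. unfold dX. field. lra. }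
    apply (is_lim_eq_lim _ _ (sd i / lam i * (0 - sd i / (n - 1) * (/ (n - 1) - 1)))).
    { unfold L. rewrite Rpow_mult_distr, pow2_sqrt by (apply Rdiv_le_0_compat; lra). field. lra. }
    apply is_lim_mult'; [apply is_lim_const|]. apply is_lim_minus'; [apply dX_tends_to_0, Hi|].
    apply is_lim_mult'; [apply X_tends_to, Hi|].
    apply is_lim_minus'; [apply G_tends_to | apply is_lim_const]. }
  apply (is_lim_ext (fun s => sqrt (Y i s ^ 2))).
  { intros s. apply sqrt_pow2. pose proof (Y_pos i s ltac:(lia)). lra. }
  rewrite <- (sqrt_pow2 L HL). apply is_lim_sqrt; [apply pow2_ge_0 | exact HY2].
Qed.

End OnInvariantSet.

Theorem theorem4p5 (r : nat) (d : nat -> nat) (lam : nat -> R)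
  (X Y : nat -> R -> R) :
  (2 <= r)%nat ->
  d 0%nat = 1%nat ->
  lam 0%nat = 0 ->
  (forall i, (1 <= i < r)%nat -> (2 <= d i)%nat) ->
  (forall i, (1 <= i < r)%nat -> 0 < lam i) ->
  RicciFlatTrajectory r d lam X Y ->
  is_lim (X 0%nat) p_infty (Finite 0) /\
  (forall i, (1 <= i < r)%nat ->
     is_lim (X i) p_infty
       (Finite (sqrt (INR (d i)) / (INR (nsum r d) - 1))) /\
     is_lim (Y i) p_infty
       (Finite (sqrt ((INR (nsum r d) - 2) / lam i)
                * (sqrt (INR (d i)) / (INR (nsum r d) - 1))))).
Proof.
  intros Hr Hd0 Hlam0 Hd Hlam [Hsys [_ [_ [HLH HY]]]].
  split; [eapply X0_tends_to_0; eassumption|].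
  intros i Hi. split; [eapply X_tends_to | eapply Y_tends_to]; eassumption.
Qed.
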